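(* Suppose that a group $G$ acts geometrically on a CAT(0) space $X$ and $|\partial X|>2$. Then for any $\alpha,\beta\in\partial X$ with $\alpha\neq\beta$, $$\limsup\{d_{\partial X}(g\alpha,g\beta)\mid g\in G\}>0.$$
   Context: A geometric action is an action by isometries which is proper and cocompact; such $X$ is proper. $\partial X$ is the visual boundary of $X$ (asymptote classes of geodesic rays), on which $G$ acts by homeomorphisms. A basepoint $x_0\in X$ is fixed; for $x\in X$ and $\alpha\in\partial X$, $\xi_{x,\alpha}$ denotes the unique geodesic ray with $\xi_{x,\alpha}(0)=x$ and $\xi_{x,\alpha}(\infty)=\alpha$. The metric on $\partial X$ is $d_{\partial X}(\alpha,\beta)=\sum_{i=1}^\infty\min\{d(\xi_{x_0,\alpha}(i),\xi_{x_0,\beta}(i)),\,2^{-i}\}$. For a function $f:G\to\mathbb{R}$, $\limsup\{f(g)\mid g\in G\}$ (resp. $\liminf$) denotes the limit superior (resp. inferior) of $f(g)$ as $g$ leaves every finite subset of $G$. *)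

From Stdlib Require Import Reals Lra List ClassicalEpsilon.
From Coquelicot Require Import Coquelicot.
Open Scope R_scope.

Section Defs.
Variable X : Type.
Variable d : X -> X -> R.

Definition is_metric : Prop :=
  (forall x y, d x y = 0 <-> x = y) /\
  (forall x y, d x y = d y x) /\
  (forall x y z, d x z <= d x y + d y z).

Definition geodesic_path (g : R -> X) (x y : X) : Prop :=
  g 0 = x /\ g 1 = y /\
  forall s t, 0 <= s <= 1 -> 0 <= t <= 1 -> d (g s) (g t) = Rabs (s - t) * d x y.

Definition geodesic_space : Prop :=
  forall x y, exists g, geodesic_path g x y.

Definition eucl (a b : R * R) : R :=
  sqrt ((fst a - fst b)^2 + (snd a - snd b)^2).
Definition seg_pt (a b : R * R) (s : R) : R * R :=
  (fst a + s * (fst b - fst a), snd a + s * (snd b - snd a)).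

(* CAT(0) inequality for geodesic triangles with sides g1 : p -> q,
   g2 : q -> r, g3 : r -> p and comparison triangle a b c in R^2 *)
Definition CAT0 : Prop :=
  is_metric /\ geodesic_space /\
  forall (p q r : X) (g1 g2 g3 : R -> X) (a b c : R * R),
    geodesic_path g1 p q -> geodesic_path g2 q r -> geodesic_path g3 r p ->
    eucl a b = d p q -> eucl b c = d q r -> eucl c a = d r p ->
    let sides := (g1, (a, b)) :: (g2, (b, c)) :: (g3, (c, a)) :: nil in
    forall i j s t, In i sides -> In j sides ->
      0 <= s <= 1 -> 0 <= t <= 1 ->
      d (fst i s) (fst j t) <= eucl (seg_pt (fst (snd i)) (snd (snd i)) s)
                                    (seg_pt (fst (snd j)) (snd (snd j)) t).

Definition ball (x : X) (r : R) : X -> Prop := fun y => d x y < r.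

Definition open_set (U : X -> Prop) : Prop :=
  forall x, U x -> exists e, 0 < e /\ forall y, ball x e y -> U y.

Definition compact_set (K : X -> Prop) : Prop :=
  forall (I : Type) (U : I -> X -> Prop),
    (forall i, open_set (U i)) ->
    (forall x, K x -> exists i, U i x) ->
    exists l : list I, forall x, K x -> exists i, In i l /\ U i x.

Definition geodesic_ray (xi : R -> X) : Prop :=
  forall s t, 0 <= s -> 0 <= t -> d (xi s) (xi t) = Rabs (s - t).

Definition asymptotic (xi eta : R -> X) : Prop :=
  exists C, forall t, 0 <= t -> d (xi t) (eta t) <= C.

(* xi_{x0,alpha}: the (unique, for complete CAT(0) X) geodesic ray from x0
   in the asymptote class of the ray xi *)
Definition ray_from (x0 : X) (xi : R -> X) : R -> X :=
  epsilon (inhabits (fun _ : R => x0))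
    (fun eta => geodesic_ray eta /\ eta 0 = x0 /\ asymptotic xi eta).

(* the metric on the visual boundary, evaluated on the classes of xi, eta *)
Definition dbd (x0 : X) (xi eta : R -> X) : R :=
  Series (fun n => Rmin (d (ray_from x0 xi (INR (S n))) (ray_from x0 eta (INR (S n))))
                        ((/ 2) ^ (S n))).
End Defs.

Section Group.
Variable G : Type.
Variables (mul : G -> G -> G) (inv : G -> G) (e : G).

Definition is_group : Prop :=
  (forall a b c, mul a (mul b c) = mul (mul a b) c) /\
  (forall a, mul e a = a) /\
  (forall a, mul (inv a) a = e).

Variable X : Type.
Variable d : X -> X -> R.
Variable act : G -> X -> X.

Definition isometric_action : Prop :=
  (forall x, act e x = x) /\
  (forall g h x, act (mul g h) x = act g (act h x)) /\
  (forall g x y, d (act g x) (act g y) = d x y).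

Definition proper_action : Prop :=
  forall x, exists r, 0 < r /\ exists l : list G,
    forall g, (exists y, ball X d x r y /\ ball X d x r (act g y)) -> In g l.

Definition cocompact_action : Prop :=
  exists K, compact_set X d K /\ forall x, exists g y, K y /\ x = act g y.

Definition geometric_action : Prop :=
  isometric_action /\ proper_action /\ cocompact_action.

(* limsup of f(g) as g leaves every finite subset of G *)
Definition limsupG (f : G -> R) : Rbar :=
  Rbar_glb (fun y => exists F : list G,
    y = Rbar_lub (fun z => exists g, ~ In g F /\ z = Finite (f g))).
End Group.

From Pilot Require Import Defs.
From Stdlib Require Import Reals Lra Psatz List ClassicalEpsilon Classical.
From Coquelicot Require Import Coquelicot.
Open Scope R_scope.

(* Move the pair of boundary points by [h^-1], where [h x0] is within the cocompactness
   constant [D0] of [beta t], [t] large. From [h x0], the ray towards [beta] runs along [beta]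
   and so moves away from [q := beta 0] at unit speed. By the CAT(0) cosine law, the angle at
   [q] between [beta] and the ray [rho] from [q] towards [alpha] is bounded below, so the ray
   from [h x0] towards [alpha] moves away from [q] strictly slower, and at a fixed time [n]
   the two rays are at distance at least 1. Translating back, the [n]-th term of the series
   defining [d_dX(h^-1 alpha, h^-1 beta)] is [2^-n], and [h^-1] leaves any finite set once
   [t] is large. Cocompactness and properness make [X] complete, which is needed for rays
   with a prescribed basepoint and endpoint to exist. *)

Lemma ratio_unit (a b : R) : 0 <= a -> a <= b -> 0 < b -> 0 <= a / b <= 1.
Proof. intros. split; [apply Rdiv_le_0_compat | apply Rle_div_l]; lra. Qed.

Lemma list_bounded {A : Type} (l : list A) (f : A -> R) :
  exists B, forall a, In a l -> f a <= B.
Proof.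
  induction l as [|a l [B HB]].
  - exists 0. intros a [].
  - exists (Rmax (f a) B). intros b [<-|Hb].
    + apply Rmax_l.
    + eapply Rle_trans; [apply HB, Hb | apply Rmax_r].
Qed.

Lemma eucl_sq (a b : R * R) : eucl a b ^ 2 = (fst a - fst b) ^ 2 + (snd a - snd b) ^ 2.
Proof.
  unfold eucl. rewrite pow2_sqrt; [reflexivity |].
  apply Rplus_le_le_0_compat; apply pow2_ge_0.
Qed.

Lemma eucl_seg_pt_sq (a b c : R * R) (l m : R) :
  eucl (seg_pt a b l) (seg_pt c a (1 - m)) ^ 2 =
  l ^ 2 * eucl a b ^ 2 + m ^ 2 * eucl c a ^ 2
  - l * m * (eucl a b ^ 2 + eucl c a ^ 2 - eucl b c ^ 2).
Proof. rewrite !eucl_sq. unfold seg_pt; cbn [fst snd]. ring. Qed.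

Lemma euclidean_triangle_exists (l1 l2 l3 : R) : 0 <= l1 -> 0 <= l2 -> 0 <= l3 ->
  l3 <= l1 + l2 -> l1 <= l2 + l3 -> l2 <= l1 + l3 ->
  exists a b c : R * R, eucl a b = l1 /\ eucl b c = l3 /\ eucl c a = l2.
Proof.
  intros h1 h2 h3 t1 t2 t3.
  destruct (Req_dec l1 0) as [->|Hl1].
  { exists (0, 0), (0, 0), (l2, 0). unfold eucl; cbn [fst snd].
    replace l3 with l2 by lra.
    repeat split.
    - replace ((0 - 0) ^ 2 + (0 - 0) ^ 2) with 0 by ring. apply sqrt_0.
    - replace ((0 - l2) ^ 2 + (0 - 0) ^ 2) with (l2 ^ 2) by ring. apply sqrt_pow2; lra.
    - replace ((l2 - 0) ^ 2 + (0 - 0) ^ 2) with (l2 ^ 2) by ring. apply sqrt_pow2; lra. }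
  (* apex (x, y) of the triangle on the base [(0,0), (l1,0)] *)
  set (x := (l1 ^ 2 + l2 ^ 2 - l3 ^ 2) / (2 * l1)).
  assert (Hx2 : x ^ 2 <= l2 ^ 2).
  { assert (Hxe : x * (2 * l1) = l1 ^ 2 + l2 ^ 2 - l3 ^ 2) by (unfold x; field; lra).
    assert (- l2 <= x) by (apply Rnot_lt_le; intro; nra).
    assert (x <= l2) by (apply Rnot_lt_le; intro; nra).
    nra. }
  set (y := sqrt (l2 ^ 2 - x ^ 2)).
  assert (Hy : y ^ 2 = l2 ^ 2 - x ^ 2) by (apply pow2_sqrt; lra).
  exists (0, 0), (l1, 0), (x, y). unfold eucl; cbn [fst snd].
  repeat split.
  - replace ((0 - l1) ^ 2 + (0 - 0) ^ 2) with (l1 ^ 2) by ring. apply sqrt_pow2; lra.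
  - replace ((l1 - x) ^ 2 + (0 - y) ^ 2) with (l3 ^ 2); [apply sqrt_pow2; lra |].
    replace ((0 - y) ^ 2) with (y ^ 2) by ring. rewrite Hy. unfold x. field. lra.
  - replace ((x - 0) ^ 2 + (y - 0) ^ 2) with (l2 ^ 2); [apply sqrt_pow2; lra |].
    replace ((y - 0) ^ 2) with (y ^ 2) by ring. rewrite Hy. ring.
Qed.

Lemma eventually_ge (r : R) : exists N, forall n, (N <= n)%nat -> r <= INR n.
Proof.
  destruct (INR_unbounded r) as [N HN]. exists N. intros n Hn.
  apply le_INR in Hn. lra.
Qed.

Lemma Series_ge_term (a : nat -> R) :
  (forall k, 0 <= a k) -> ex_series a -> forall k, a k <= Series a.
Proof.
  intros Hpos Hex k. revert a Hpos Hex. induction k as [|k IH]; intros a Hpos Hex;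
    rewrite Series_incr_1 by exact Hex;
    pose proof (proj1 (ex_series_incr_1 a) Hex) as Hex1.
  - enough (0 <= Series (fun k => a (S k))) by lra.
    replace 0 with (Series (fun _ => 0)).
    2: { rewrite <- (Series_ext (fun n => 0 * a n)) by (intro; ring). rewrite Series_scal_l. ring. }
    apply Series_le; [intro n; split; [lra | apply Hpos] | exact Hex1].
  - pose proof (IH (fun k => a (S k)) (fun n => Hpos (S n)) Hex1). pose proof (Hpos 0%nat). lra.
Qed.

Lemma dbd_ge_term (X : Type) (d : X -> X -> R) (x0 : X) (xi eta : R -> X) (N : nat) :
  (forall a b, 0 <= d a b) ->
  (/ 2) ^ S N <= d (ray_from X d x0 xi (INR (S N))) (ray_from X d x0 eta (INR (S N))) ->
  (/ 2) ^ S N <= dbd X d x0 xi eta.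
Proof.
  intros Hd HN. unfold dbd.
  set (a := fun n => Rmin (d (ray_from X d x0 xi (INR (S n))) (ray_from X d x0 eta (INR (S n))))
                          ((/ 2) ^ S n)).
  assert (Ha : forall n, 0 <= a n <= (/ 2) ^ S n).
  { intro n. split; [apply Rmin_glb; [apply Hd | apply pow_le; lra] | apply Rmin_r]. }
  replace ((/ 2) ^ S N) with (a N) by (apply Rmin_right; exact HN).
  apply Series_ge_term; [apply Ha |].
  apply (ex_series_le a (fun n => (/ 2) ^ S n)).
  - intro n. rewrite Rabs_right by (apply Rle_ge, Ha). apply Ha.
  - apply (ex_series_incr_1 (fun n => (/ 2) ^ n)), ex_series_geom. rewrite Rabs_right; lra.
Qed.

Lemma limsupG_ge (G : Type) (f : G -> R) (delta : R) :
  (forall F : list G, exists g, ~ In g F /\ delta <= f g) -> Rbar_le delta (limsupG G f).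
Proof.
  intros H. unfold limsupG, Rbar_glb. case (Rbar_ex_glb _). intros m Hm. cbn [proj1_sig].
  apply (proj2 Hm). intros z [F Hz]. subst z.
  unfold Rbar_lub. case (Rbar_ex_lub _). intros u Hu. cbn [proj1_sig].
  destruct (H F) as [g [Hg Hfg]].
  apply (Rbar_le_trans _ (f g)); [exact Hfg |].
  apply (proj1 Hu). exists g. auto.
Qed.

Definition cauchy_seq {X} (d : X -> X -> R) (x : nat -> X) : Prop :=
  forall eps, 0 < eps -> exists N, forall n m, (N <= n)%nat -> (N <= m)%nat -> d (x n) (x m) < eps.
Definition conv_to {X} (d : X -> X -> R) (x : nat -> X) (l : X) : Prop :=
  forall eps, 0 < eps -> exists N, forall n, (N <= n)%nat -> d (x n) l < eps.
Definition complete_space {X} (d : X -> X -> R) : Prop :=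
  forall x, cauchy_seq d x -> exists l, conv_to d x l.

Section CAT0.
Variable X : Type.
Variable d : X -> X -> R.
Hypothesis HC : CAT0 X d.

Lemma metric_eq0 x y : d x y = 0 -> x = y.
Proof. apply (proj1 HC). Qed.
Lemma metric_refl x : d x x = 0.
Proof. apply (proj1 HC); reflexivity. Qed.
Lemma metric_sym x y : d x y = d y x.
Proof. apply (proj1 (proj2 (proj1 HC))). Qed.
Lemma metric_triangle x y z : d x z <= d x y + d y z.
Proof. apply (proj2 (proj2 (proj1 HC))). Qed.
Lemma metric_nonneg x y : 0 <= d x y.
Proof. pose proof (metric_triangle x y x). rewrite metric_refl, (metric_sym y x) in H. lra. Qed.
Lemma geodesic_exists x y : exists g, geodesic_path X d g x y.
Proof. apply (proj1 (proj2 HC)). Qed.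

Lemma geodesic_rev g x y :
  geodesic_path X d g x y -> geodesic_path X d (fun s => g (1 - s)) y x.
Proof.
  intros [H0 [H1 H]]. split; [|split].
  - replace (1 - 0) with 1 by ring. exact H1.
  - replace (1 - 1) with 0 by ring. exact H0.
  - intros s t Hs Ht. rewrite H, metric_sym by lra.
    rewrite <- Rabs_Ropp. f_equal; f_equal; ring.
Qed.

(* The right-hand side is the squared distance between the corresponding points of the
   Euclidean comparison triangle. *)
Lemma cat0_cosine_law (p P1 P2 : X) c1 c2 (l m : R) :
  geodesic_path X d c1 p P1 -> geodesic_path X d c2 p P2 ->
  0 <= l <= 1 -> 0 <= m <= 1 ->
  d (c1 l) (c2 m) ^ 2 <= l ^ 2 * d p P1 ^ 2 + m ^ 2 * d p P2 ^ 2
      - l * m * (d p P1 ^ 2 + d p P2 ^ 2 - d P1 P2 ^ 2).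
Proof.
  intros G1 G2 Hl Hm.
  destruct (geodesic_exists P1 P2) as [g2 G12].
  destruct (euclidean_triangle_exists (d p P1) (d p P2) (d P1 P2))
    as [a [b [c [E1 [E2 E3]]]]]; try apply metric_nonneg.
  { pose proof (metric_triangle P1 p P2). rewrite (metric_sym P1 p) in H. lra. }
  { pose proof (metric_triangle p P2 P1). rewrite (metric_sym P2 P1) in H. lra. }
  { apply metric_triangle. }
  rewrite <- E1, <- E2, <- E3, <- eucl_seg_pt_sq.
  rewrite (metric_sym p P2) in E3.
  pose proof (proj2 (proj2 HC) p P1 P2 c1 g2 (fun s => c2 (1 - s)) a b c G1 G12
                (geodesic_rev _ _ _ G2) E1 E2 E3) as H.
  specialize (H (c1, (a, b)) ((fun s => c2 (1 - s)), (c, a)) l (1 - m)).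
  cbn [fst snd] in H. replace (1 - (1 - m)) with m in H by ring.
  apply pow_incr. split; [apply metric_nonneg |].
  apply H; cbn; auto; lra.
Qed.

Lemma geodesics_from_point_contract (p P1 P2 : X) c1 c2 (l : R) :
  geodesic_path X d c1 p P1 -> geodesic_path X d c2 p P2 -> 0 <= l <= 1 ->
  d (c1 l) (c2 l) <= l * d P1 P2.
Proof.
  intros G1 G2 Hl.
  pose proof (cat0_cosine_law p P1 P2 c1 c2 l l G1 G2 Hl Hl) as H.
  pose proof (metric_nonneg (c1 l) (c2 l)). pose proof (metric_nonneg P1 P2).
  apply Rsqr_incr_0_var; [unfold Rsqr; nra | nra].
Qed.

Lemma dist_geodesics_convex (a b a' b' : X) c c' (l : R) :
  geodesic_path X d c a b -> geodesic_path X d c' a' b' -> 0 <= l <= 1 ->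
  d (c l) (c' l) <= (1 - l) * d a a' + l * d b b'.
Proof.
  intros G G' Hl.
  destruct (geodesic_exists a b') as [c'' G''].
  pose proof (geodesics_from_point_contract _ _ _ _ _ l G G'' Hl) as H1.
  pose proof (geodesics_from_point_contract _ _ _ _ _ (1 - l)
                (geodesic_rev _ _ _ G'') (geodesic_rev _ _ _ G') ltac:(lra)) as H2.
  cbv beta in H2. replace (1 - (1 - l)) with l in H2 by ring.
  pose proof (metric_triangle (c l) (c'' l) (c' l)). lra.
Qed.

Lemma ray_dist xi s t : geodesic_ray X d xi -> 0 <= s <= t -> d (xi s) (xi t) = t - s.
Proof. intros R Hst. rewrite R, Rabs_left1; lra. Qed.

Lemma ray_segment xi a S : geodesic_ray X d xi -> 0 <= a -> 0 <= S ->
  geodesic_path X d (fun s => xi (a + s * S)) (xi a) (xi (a + S)).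
Proof.
  intros R Ha HS. split; [|split].
  - f_equal; ring.
  - f_equal; ring.
  - intros s t Hs Ht. rewrite !R by nra.
    replace (a + s * S - (a + t * S)) with ((s - t) * S) by ring.
    replace (a - (a + S)) with (- S) by ring.
    rewrite Rabs_mult, Rabs_Ropp, (Rabs_right S) by lra. reflexivity.
Qed.

Lemma ray_shift xi a : geodesic_ray X d xi -> 0 <= a ->
  geodesic_ray X d (fun s => xi (a + s)).
Proof. intros R Ha s t Hs Ht. rewrite R by lra. f_equal; ring. Qed.

(* The distance between two rays is convex in time, and a bounded convex function on
   [0, oo) is nonincreasing. *)
Lemma asymptotic_rays_dist_le (u v : R -> X) :
  geodesic_ray X d u -> geodesic_ray X d v -> asymptotic X d u v ->
  forall s, 0 <= s -> d (u s) (v s) <= d (u 0) (v 0).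
Proof.
  intros Ru Rv [C HCb] s Hs.
  assert (HC0 : 0 <= C)
    by (pose proof (HCb 0 (Rle_refl 0)); pose proof (metric_nonneg (u 0) (v 0)); lra).
  apply Rle_plus_epsilon. intros eps Heps.
  set (S := s * C / eps + s + 1).
  assert (Hfrac : 0 <= s * C / eps) by (apply Rdiv_le_0_compat; nra).
  assert (HS : s < S) by (unfold S; lra).
  pose proof (dist_geodesics_convex _ _ _ _ _ _ (s / S)
      (ray_segment u 0 S Ru (Rle_refl 0) ltac:(lra))
      (ray_segment v 0 S Rv (Rle_refl 0) ltac:(lra))
      (ratio_unit s S ltac:(lra) ltac:(lra) ltac:(lra))) as H.
  cbv beta in H. replace (0 + s / S * S) with s in H by (field; lra).
  replace (0 + S) with S in H by ring.
  pose proof (HCb S ltac:(lra)). pose proof (metric_nonneg (u 0) (v 0)).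
  assert (s / S * C <= eps).
  { replace (s / S * C) with (s * C / S) by (field; lra). apply Rle_div_l; [lra |].
    unfold S. replace (s * C) with (s * C / eps * eps) at 1 by (field; lra). nra. }
  pose proof (ratio_unit s S ltac:(lra) ltac:(lra) ltac:(lra)). nra.
Qed.

Lemma asymptotic_ray_tracks (sigma tau : R -> X) (t D : R) :
  geodesic_ray X d sigma -> geodesic_ray X d tau -> asymptotic X d sigma tau ->
  0 <= t -> d (sigma 0) (tau t) <= D ->
  forall s, 0 <= s -> d (sigma s) (tau (t + s)) <= D.
Proof.
  intros Rs Rt [C HCb] Ht HD s Hs.
  enough (d (sigma s) (tau (t + s)) <= d (sigma 0) (tau (t + 0))) by (rewrite Rplus_0_r in H; lra).
  apply (asymptotic_rays_dist_le sigma (fun r => tau (t + r))); auto using ray_shift.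
  exists (C + t). intros r Hr.
  pose proof (metric_triangle (sigma r) (tau r) (tau (t + r))).
  rewrite (ray_dist tau r (t + r)) in H by (auto; lra).
  specialize (HCb r Hr). lra.
Qed.

Lemma conv_to_const (x : X) : conv_to d (fun _ => x) x.
Proof. intros eps Heps. exists 0%nat. intros. rewrite metric_refl. exact Heps. Qed.

Lemma conv_to_dist_bounds (x y : nat -> X) (a b : X) (c1 c2 : R) :
  conv_to d x a -> conv_to d y b ->
  (exists N, forall n, (N <= n)%nat -> c1 <= d (x n) (y n) <= c2) ->
  c1 <= d a b <= c2.
Proof.
  intros Hx Hy [N HN].
  assert (Hclose : forall eps, 0 < eps ->
            exists n, c1 <= d (x n) (y n) <= c2 /\ d (x n) a + d (y n) b < eps).
  { intros eps Heps.
    destruct (Hx (eps / 2) ltac:(lra)) as [N1 H1]. destruct (Hy (eps / 2) ltac:(lra)) as [N2 H2].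
    exists (Nat.max N (Nat.max N1 N2)). split; [apply HN; lia |].
    specialize (H1 (Nat.max N (Nat.max N1 N2)) ltac:(lia)).
    specialize (H2 (Nat.max N (Nat.max N1 N2)) ltac:(lia)). lra. }
  split; apply Rle_plus_epsilon; intros eps Heps; destruct (Hclose eps Heps) as [n [Hn Hs]].
  - pose proof (metric_triangle (x n) a (y n)). pose proof (metric_triangle a b (y n)).
    rewrite (metric_sym b (y n)) in *. lra.
  - pose proof (metric_triangle a (x n) b). pose proof (metric_triangle (x n) (y n) b).
    rewrite (metric_sym a (x n)), (metric_sym (y n) b) in *. lra.
Qed.

(* [n, m] are the times and [Ln, Lm] the distances from a point at distance [D] from
   the origin of a ray to the points of the ray at these times. *)
Lemma cosine_defect_bound (D Ln Lm n m : R) : 0 <= D -> 1 <= Ln -> 1 <= Lm -> 0 <= n <= m ->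
  Rabs (Ln - n) <= D -> Rabs (Lm - m) <= D ->
  (m - n) ^ 2 - (Ln - Lm) ^ 2 <= 4 * D * (1 + 2 * D) * Lm.
Proof.
  intros HD H1 H2 Hnm A1 A2. apply Rabs_le_between in A1, A2.
  set (a := m - n). set (b := Lm - Ln).
  assert (Hab : a - 2 * D <= b <= a + 2 * D) by (unfold a, b; lra).
  assert (a ^ 2 - b ^ 2 <= 2 * D * (2 * a + 2 * D)).
  { destruct (Rle_dec 0 (a + b)).
    - assert (0 <= (2 * D - (a - b)) * (a + b)) by (apply Rmult_le_pos; lra). nra.
    - assert (0 <= a) by (unfold a; lra).
      assert ((a - b) * (a + b) <= 0) by (apply Rmult_le_0_l; lra). nra. }
  replace ((Ln - Lm) ^ 2) with (b ^ 2) by (unfold b; ring).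
  assert (a <= Lm + D) by (unfold a; lra).
  nra.
Qed.

(* The ray from [y] asymptotic to [xi] is the pointwise limit of the geodesics from [y]
   to [xi n]; the cosine law makes them Cauchy. *)
Section AsymptoticRay.
Hypothesis Hcomp : complete_space d.
Variable y : X.
Variable xi : R -> X.
Hypothesis Rxi : geodesic_ray X d xi.

Let D := d y (xi 0).
Let L (n : nat) := d y (xi (INR n)).
Let gam (n : nat) : R -> X :=
  epsilon (inhabits (fun _ : R => y)) (fun g => geodesic_path X d g y (xi (INR n))).
Let Gam (n : nat) (s : R) : X := gam n (s / L n).

Lemma gam_geodesic n : geodesic_path X d (gam n) y (xi (INR n)).
Proof. apply epsilon_spec, geodesic_exists. Qed.

Lemma L_near n : INR n - D <= L n <= INR n + D.
Proof.
  pose proof (ray_dist xi 0 (INR n) Rxi ltac:(split; [lra | apply pos_INR])).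
  pose proof (metric_triangle y (xi 0) (xi (INR n))).
  pose proof (metric_triangle (xi 0) y (xi (INR n))) as H'.
  rewrite (metric_sym (xi 0) y) in H'. unfold L, D. lra.
Qed.

Lemma Gam_0 n : Gam n 0 = y.
Proof. unfold Gam. rewrite Rdiv_0_l. apply (gam_geodesic n). Qed.

Lemma Gam_dist n s t : 0 < L n -> 0 <= s <= L n -> 0 <= t <= L n ->
  d (Gam n s) (Gam n t) = Rabs (s - t).
Proof.
  intros HL Hs Ht. unfold Gam.
  rewrite (proj2 (proj2 (gam_geodesic n))) by (apply ratio_unit; lra). fold (L n).
  replace (s / L n - t / L n) with ((s - t) / L n) by (field; lra).
  rewrite Rabs_div, (Rabs_right (L n)) by lra. field. lra.
Qed.

Lemma Gam_close n m s : (n <= m)%nat -> 0 <= s -> s + D + 1 <= INR n ->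
  d (Gam n s) (Gam m s) ^ 2 <= s ^ 2 * (4 * D * (1 + 2 * D)) / (INR n - D).
Proof.
  intros Hnm Hs Hn.
  apply le_INR in Hnm.
  pose proof (L_near n). pose proof (L_near m).
  assert (HD : 0 <= D) by apply metric_nonneg.
  pose proof (cat0_cosine_law _ _ _ _ _ (s / L n) (s / L m) (gam_geodesic n) (gam_geodesic m)
                (ratio_unit s (L n) ltac:(lra) ltac:(lra) ltac:(lra))
                (ratio_unit s (L m) ltac:(lra) ltac:(lra) ltac:(lra))) as M.
  fold (L n) (L m) in M. fold (Gam n s) (Gam m s) in M.
  rewrite (ray_dist xi (INR n) (INR m) Rxi ltac:(split; [apply pos_INR | lra])) in M.
  pose proof (cosine_defect_bound D (L n) (L m) (INR n) (INR m) ltac:(lra) ltac:(lra) ltac:(lra)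
                ltac:(split; [apply pos_INR | lra]) ltac:(apply Rabs_le_between; lra)
                ltac:(apply Rabs_le_between; lra)) as Hdef.
  set (K := 4 * D * (1 + 2 * D)) in Hdef |- *.
  assert (HK : 0 <= K) by (unfold K; nra).
  eapply Rle_trans; [exact M |].
  replace ((s / L n) ^ 2 * L n ^ 2 + (s / L m) ^ 2 * L m ^ 2
           - s / L n * (s / L m) * (L n ^ 2 + L m ^ 2 - (INR m - INR n) ^ 2))
    with (s ^ 2 * ((INR m - INR n) ^ 2 - (L n - L m) ^ 2) / (L n * L m)) by (field; lra).
  apply Rle_trans with (s ^ 2 * K / L n).
  - replace (s ^ 2 * K / L n) with (s ^ 2 * (K * L m) / (L n * L m)) by (field; lra).
    apply Rmult_le_compat_r; [apply Rlt_le, Rinv_0_lt_compat; nra |].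
    apply Rmult_le_compat_l; [nra | lra].
  - apply Rmult_le_compat_l; [nra |]. apply Rinv_le_contravar; lra.
Qed.

Lemma Gam_cauchy s : 0 <= s -> cauchy_seq d (fun n => Gam n s).
Proof.
  intros Hs eps Heps.
  assert (HD : 0 <= D) by apply metric_nonneg.
  set (K := 4 * D * (1 + 2 * D)).
  assert (HK : 0 <= s ^ 2 * K / eps ^ 2) by (apply Rdiv_le_0_compat; unfold K; nra).
  destruct (eventually_ge (s + D + 1 + s ^ 2 * K / eps ^ 2)) as [N HN].
  assert (Hlt : forall n m, (N <= n)%nat -> (n <= m)%nat -> d (Gam n s) (Gam m s) < eps).
  { intros n m Hn Hnm. specialize (HN n Hn).
    pose proof (Gam_close n m s Hnm Hs ltac:(lra)) as Hc. fold K in Hc.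
    assert (s ^ 2 * K / (INR n - D) < eps ^ 2).
    { apply Rlt_div_l; [lra |].
      replace (s ^ 2 * K) with (s ^ 2 * K / eps ^ 2 * eps ^ 2) by (field; lra). nra. }
    pose proof (metric_nonneg (Gam n s) (Gam m s)). nra. }
  exists N. intros n m Hn Hm. destruct (Nat.le_ge_cases n m).
  - apply Hlt; auto.
  - rewrite metric_sym. apply Hlt; auto.
Qed.

Lemma Gam_near_ray n s : 0 <= s -> s + D + 1 <= INR n -> d (Gam n s) (xi s) <= 2 * D.
Proof.
  intros Hs Hn.
  assert (HD : 0 <= D) by apply metric_nonneg.
  pose proof (L_near n) as HL.
  pose proof (ratio_unit s (INR n) Hs ltac:(lra) ltac:(lra)) as Hl.
  assert (Hgam : d (gam n (s / INR n)) (xi s) <= D).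
  { pose proof (dist_geodesics_convex _ _ _ _ _ _ (s / INR n) (gam_geodesic n)
                  (ray_segment xi 0 (INR n) Rxi (Rle_refl 0) ltac:(lra)) Hl) as H.
    cbv beta in H. replace (0 + s / INR n * INR n) with s in H by (field; lra).
    rewrite Rplus_0_l, metric_refl in H. fold D in H. nra. }
  assert (HGam : d (Gam n s) (gam n (s / INR n)) <= D).
  { unfold Gam.
    rewrite (proj2 (proj2 (gam_geodesic n))) by (auto; apply ratio_unit; lra). fold (L n).
    replace (s / L n - s / INR n) with (s / INR n * ((INR n - L n) / L n)) by (field; lra).
    rewrite Rabs_mult, (Rabs_right (s / INR n)), Rabs_div, (Rabs_right (L n)) by lra.
    replace (s / INR n * (Rabs (INR n - L n) / L n) * L n) with (s / INR n * Rabs (INR n - L n))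
      by (field; lra).
    assert (Rabs (INR n - L n) <= D) by (apply Rabs_le_between; lra). nra. }
  pose proof (metric_triangle (Gam n s) (gam n (s / INR n)) (xi s)). lra.
Qed.

Let eta (s : R) : X := epsilon (inhabits y) (fun l => conv_to d (fun n => Gam n s) l).

Lemma eta_limit s : 0 <= s -> conv_to d (fun n => Gam n s) (eta s).
Proof. intros Hs. apply epsilon_spec, Hcomp, Gam_cauchy, Hs. Qed.

Lemma asymptotic_ray_exists :
  exists eta, geodesic_ray X d eta /\ eta 0 = y /\ asymptotic X d xi eta.
Proof.
  assert (HD : 0 <= D) by apply metric_nonneg.
  exists eta. split; [|split].
  - intros s t Hs Ht.
    enough (Rabs (s - t) <= d (eta s) (eta t) <= Rabs (s - t)) by lra.
    apply (conv_to_dist_bounds _ _ _ _ _ _ (eta_limit s Hs) (eta_limit t Ht)).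
    destruct (eventually_ge (s + t + D + 1)) as [N HN]. exists N. intros n Hn.
    specialize (HN n Hn). pose proof (L_near n). rewrite Gam_dist by lra. lra.
  - apply metric_eq0.
    enough (0 <= d (eta 0) y <= 0) by lra.
    apply (conv_to_dist_bounds _ (fun _ => y) _ _ 0 0 (eta_limit 0 (Rle_refl 0))
             (conv_to_const y)).
    exists 0%nat. intros n _. rewrite Gam_0, metric_refl. lra.
  - exists (2 * D). intros s Hs. rewrite metric_sym.
    enough (0 <= d (eta s) (xi s) <= 2 * D) by lra.
    apply (conv_to_dist_bounds _ (fun _ => xi s) _ _ 0 (2 * D) (eta_limit s Hs)
             (conv_to_const (xi s))).
    destruct (eventually_ge (s + D + 1)) as [N HN]. exists N. intros n Hn.
    split; [apply metric_nonneg | apply Gam_near_ray; auto].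
Qed.
End AsymptoticRay.

Definition cluster_point (x : nat -> X) (c : X) : Prop :=
  forall eps, 0 < eps -> forall M, exists n, (M <= n)%nat /\ d (x n) c < eps.

Lemma not_cluster_point (x : nat -> X) (c : X) : ~ cluster_point x c ->
  exists eps M, 0 < eps /\ forall n, (M <= n)%nat -> eps <= d (x n) c.
Proof.
  intros Hc. apply NNPP. intro Hn. apply Hc. intros eps Heps M.
  apply NNPP. intro Hm. apply Hn. exists eps, M. split; [exact Heps |].
  intros n HMn. apply Rnot_lt_le. intro Hlt. apply Hm. exists n. auto.
Qed.

Lemma ball_open x r : Defs.open_set X d (Defs.ball X d x r).
Proof.
  intros y Hy. unfold Defs.ball in *. exists (r - d x y). split; [lra |].
  intros z Hz. pose proof (metric_triangle x y z). lra.
Qed.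

Lemma compact_cluster_point (K : X -> Prop) (w : nat -> X) :
  compact_set X d K -> (forall n, K (w n)) -> exists c, cluster_point w c.
Proof.
  intros HK Hw. apply NNPP. intro Hno.
  (* cover [K] by balls, each of which [w] eventually avoids *)
  set (I := {p : X * (R * nat) | 0 < fst (snd p) /\
              forall n, (snd (snd p) <= n)%nat -> fst (snd p) <= d (w n) (fst p)}).
  destruct (HK I (fun i => Defs.ball X d (fst (proj1_sig i)) (fst (snd (proj1_sig i))))) as [l Hl].
  - intro i. apply ball_open.
  - intros c _.
    destruct (not_cluster_point w c (fun H => Hno (ex_intro _ c H))) as [eps [M [Heps HM]]].
    exists (exist _ (c, (eps, M)) (conj Heps HM)). unfold Defs.ball. cbn.
    rewrite metric_refl. exact Heps.
  - set (f := fun i : I => snd (snd (proj1_sig i))).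
    set (M := list_max (map f l)).
    destruct (Hl (w M) (Hw M)) as [[[c [eps N]] [Heps HN]] [Hi Hball]].
    assert (HNM : (N <= M)%nat).
    { pose proof (proj1 (list_max_le (map f l) M) (le_n _)) as HF.
      rewrite Forall_forall in HF. apply (HF (f (exist _ (c, (eps, N)) (conj Heps HN)))).
      apply in_map, Hi. }
    pose proof (HN M HNM) as Hfar. unfold Defs.ball in Hball. cbn in Hball, Hfar.
    rewrite metric_sym in Hfar. lra.
Qed.

Lemma cluster_point_in_list (x : nat -> X) (l : list X) :
  (forall eps, 0 < eps -> forall M, exists m p, (M <= m)%nat /\ In p l /\ d (x m) p < eps) ->
  exists p, cluster_point x p.
Proof.
  induction l as [|a l IH]; intros H.
  { destruct (H 1 Rlt_0_1 0%nat) as [m [p [_ [[] _]]]]. }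
  destruct (classic (cluster_point x a)) as [Ha | Ha]; [exists a; exact Ha |].
  destruct (not_cluster_point x a Ha) as [ea [Ma [Hea HMa]]].
  apply IH. intros eps Heps M.
  destruct (H (Rmin eps ea) (Rmin_pos _ _ Heps Hea) (Nat.max M Ma)) as [m [p [Hm [[<- | Hp] Hd]]]].
  - specialize (HMa m ltac:(lia)). pose proof (Rmin_r eps ea). lra.
  - exists m, p. pose proof (Rmin_l eps ea). repeat split; [lia | exact Hp | lra].
Qed.

Lemma cauchy_cluster_point_conv (x : nat -> X) (c : X) :
  cauchy_seq d x -> cluster_point x c -> conv_to d x c.
Proof.
  intros Hx Hc eps Heps.
  destruct (Hx (eps / 2) ltac:(lra)) as [N HN].
  destruct (Hc (eps / 2) ltac:(lra) N) as [m [Hm Hmc]].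
  exists N. intros n Hn. specialize (HN n m Hn Hm).
  pose proof (metric_triangle (x n) (x m) c). lra.
Qed.

Lemma ray_from_spec (x0 : X) (xi : R -> X) : complete_space d -> geodesic_ray X d xi ->
  geodesic_ray X d (ray_from X d x0 xi) /\ ray_from X d x0 xi 0 = x0 /\
  asymptotic X d xi (ray_from X d x0 xi).
Proof.
  intros Hcomp Rxi. unfold ray_from.
  apply epsilon_spec, (asymptotic_ray_exists Hcomp x0 xi Rxi).
Qed.

Lemma rays_separate (alpha beta rho : R -> X) :
  asymptotic X d alpha rho -> beta 0 = rho 0 -> ~ asymptotic X d alpha beta ->
  exists T, 0 < T /\ 0 < d (beta T) (rho T).
Proof.
  intros [C HC'] H0 Hna. apply NNPP. intro Hn. apply Hna. exists C. intros s Hs.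
  assert (Hsr : d (beta s) (rho s) = 0).
  { destruct (Req_dec s 0) as [-> | Hs0]; [rewrite H0; apply metric_refl |].
    pose proof (metric_nonneg (beta s) (rho s)).
    destruct (Req_dec (d (beta s) (rho s)) 0) as [E | E]; [exact E |].
    exfalso. apply Hn. exists s. split; lra. }
  pose proof (HC' s Hs). pose proof (metric_triangle (alpha s) (rho s) (beta s)).
  rewrite (metric_sym (rho s) (beta s)) in H1. lra.
Qed.

(* Stewart-type comparison inequality for the point at distance [n] from [y] on [y P]. *)
Lemma cat0_dist_chord_point (q y P : X) gam (n : R) :
  geodesic_path X d gam y P -> 0 < d y P -> 0 <= n <= d y P ->
  d q (gam (n / d y P)) ^ 2 <=
  d y q ^ 2 + n ^ 2 + n * (d q P ^ 2 - d y q ^ 2 - d y P ^ 2) / d y P.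
Proof.
  intros Hgam HL Hn.
  destruct (geodesic_exists y q) as [gq Hgq].
  pose proof (cat0_cosine_law _ _ _ _ _ 1 (n / d y P) Hgq Hgam ltac:(lra)
                (ratio_unit n (d y P) ltac:(lra) ltac:(lra) HL)) as M.
  rewrite (proj1 (proj2 Hgq)) in M.
  eapply Rle_trans; [exact M |]. right. field. lra.
Qed.

Lemma ray_near_chord_point (sigma : R -> X) (P : X) gam (S n C : R) :
  geodesic_ray X d sigma -> geodesic_path X d gam (sigma 0) P ->
  0 <= n <= S -> n <= d (sigma 0) P -> 0 < n -> d (sigma S) P <= C ->
  d (sigma n) (gam (n / d (sigma 0) P)) <= n * (C + Rabs (d (sigma 0) P - S)) / S.
Proof.
  intros Rs Hgam Hn HnL Hn0 HSP.
  set (L := d (sigma 0) P) in *.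
  pose proof (ratio_unit n S ltac:(lra) ltac:(lra) ltac:(lra)) as HnS.
  pose proof (ratio_unit n L ltac:(lra) ltac:(lra) ltac:(lra)) as HnL'.
  assert (Hray : d (sigma n) (gam (n / S)) <= n / S * C).
  { pose proof (geodesics_from_point_contract _ _ _ _ _ (n / S)
                  (ray_segment sigma 0 S Rs (Rle_refl 0) ltac:(lra)) Hgam HnS) as H.
    cbv beta in H. replace (0 + n / S * S) with n in H by (field; lra).
    rewrite Rplus_0_l in H. pose proof (metric_nonneg (sigma S) P). nra. }
  assert (Hchord : d (gam (n / S)) (gam (n / L)) = n / S * Rabs (L - S)).
  { rewrite (proj2 (proj2 Hgam)) by assumption. fold L.
    replace (n / S - n / L) with (n / S * ((L - S) / L)) by (field; lra).
    rewrite Rabs_mult, (Rabs_right (n / S)), Rabs_div, (Rabs_right L) by lra.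
    field. lra. }
  pose proof (metric_triangle (sigma n) (gam (n / S)) (gam (n / L))).
  replace (n * (C + Rabs (L - S)) / S) with (n / S * C + n / S * Rabs (L - S)) by (field; lra).
  lra.
Qed.

Definition angle_gap (tau rho : R -> X) (T kappa : R) : Prop :=
  forall t S, T <= t -> T <= S -> d (tau t) (rho S) ^ 2 >= t ^ 2 + S ^ 2 - t * S * (2 - kappa).

(* The comparison angle at [q] of [tau t] and [rho S] is at least that of [tau T] and
   [rho T], which is positive. *)
Lemma rays_angle_gap (q : X) tau rho (T : R) :
  geodesic_ray X d tau -> geodesic_ray X d rho -> tau 0 = q -> rho 0 = q ->
  0 < T -> 0 < d (tau T) (rho T) ->
  exists kappa, 0 < kappa <= 1 /\ angle_gap tau rho T kappa.
Proof.
  intros Rt Rr Ht0 Hr0 HT Hsep.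
  set (c := d (tau T) (rho T)) in *.
  exists (Rmin (c ^ 2 / T ^ 2) 1). split.
  { split; [apply Rmin_pos; [apply Rdiv_lt_0_compat; nra | lra] | apply Rmin_r]. }
  set (kappa := Rmin (c ^ 2 / T ^ 2) 1).
  assert (Hk0 : kappa * T ^ 2 <= c ^ 2).
  { pose proof (Rmin_l (c ^ 2 / T ^ 2) 1).
    assert (c ^ 2 / T ^ 2 * T ^ 2 = c ^ 2) by (field; lra). fold kappa in H. nra. }
  intros t S Ht HS.
  pose proof (ray_segment tau 0 t Rt (Rle_refl 0) ltac:(lra)) as G1.
  pose proof (ray_segment rho 0 S Rr (Rle_refl 0) ltac:(lra)) as G2.
  rewrite Hr0 in G2. rewrite Ht0 in G1.
  pose proof (cat0_cosine_law _ _ _ _ _ (T / t) (T / S) G1 G2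
                (ratio_unit T t ltac:(lra) ltac:(lra) ltac:(lra))
                (ratio_unit T S ltac:(lra) ltac:(lra) ltac:(lra))) as M.
  cbv beta in M.
  replace (0 + T / t * t) with T in M by (field; lra).
  replace (0 + T / S * S) with T in M by (field; lra).
  assert (Eqt : d q (tau t) = t) by (rewrite <- Ht0, (ray_dist tau 0 t Rt); lra).
  assert (EqS : d q (rho S) = S) by (rewrite <- Hr0, (ray_dist rho 0 S Rr); lra).
  rewrite !Rplus_0_l, Eqt, EqS in M. fold c in M.
  set (Z := d (tau t) (rho S)) in *.
  replace ((T / t) ^ 2 * t ^ 2 + (T / S) ^ 2 * S ^ 2
           - T / t * (T / S) * (t ^ 2 + S ^ 2 - Z ^ 2))
    with (T ^ 2 * (2 * t * S - (t ^ 2 + S ^ 2 - Z ^ 2)) / (t * S)) in M by (field; lra).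
  apply Rle_div_r in M; [| nra].
  assert (kappa * T ^ 2 * (t * S) <= T ^ 2 * (2 * t * S - (t ^ 2 + S ^ 2 - Z ^ 2))).
  { apply Rle_trans with (c ^ 2 * (t * S)); [apply Rmult_le_compat_r; nra | lra]. }
  assert (kappa * (t * S) <= 2 * t * S - (t ^ 2 + S ^ 2 - Z ^ 2)).
  { apply (Rmult_le_reg_l (T ^ 2)); nra. }
  lra.
Qed.

Lemma defect_arith (S t Z L D0 kappa : R) :
  0 <= D0 -> 0 < kappa <= 1 -> 0 <= t ->
  Z ^ 2 >= t ^ 2 + S ^ 2 - t * S * (2 - kappa) -> Z >= S - t ->
  S >= t + t ^ 2 + (t * (2 - kappa) + 2 * D0 + 1) * D0 + D0 + 1 -> L >= Z - D0 ->
  S ^ 2 - L ^ 2 <= (t * (2 - kappa) + 2 * D0 + 1) * L.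
Proof.
  intros HD Hk Ht HZ2 HZ HS HL.
  set (A := t * (2 - kappa) + 2 * D0) in *.
  assert (HA0 : 0 <= A) by (unfold A; nra).
  assert (0 <= (A + 1) * D0) by nra.
  assert (S ^ 2 <= (Z - D0) ^ 2 + (A + 1) * (Z - D0)).
  { assert (t * (2 - kappa) * (Z - (S - t)) >= 0) by (apply Rle_ge, Rmult_le_pos; nra).
    assert (t ^ 2 * (1 - kappa) <= t ^ 2) by nra.
    assert (Z >= t ^ 2 * (1 - kappa) + (A + 1) * D0) by (unfold A in *; nra).
    unfold A in *; nra. }
  nra.
Qed.

Lemma chord_arith (t t' n kappa D0 : R) :
  0 <= D0 -> 0 < kappa <= 1 -> 1 <= n -> n * kappa >= 4 * D0 + 5 ->
  t >= n * (4 * D0 + 5) -> t - D0 <= t' <= t + D0 -> 0 <= t' ->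
  t' ^ 2 + n ^ 2 + n * (t * (2 - kappa) + 2 * D0 + 1) <= (t + n - D0 - 2) ^ 2.
Proof.
  intros. assert (t' ^ 2 <= (t + D0) ^ 2) by nra.
  assert (0 <= t) by nra.
  assert (t * (n * kappa - (4 * D0 + 5)) >= 0) by nra. nra.
Qed.

Section Gap.
Variables (q : X) (tau rho : R -> X) (T kappa : R).
Hypotheses (Rt : geodesic_ray X d tau) (Rr : geodesic_ray X d rho).
Hypotheses (Ht0 : tau 0 = q) (Hr0 : rho 0 = q).
Hypotheses (HT : 0 < T) (Hk : 0 < kappa <= 1) (Hgap : angle_gap tau rho T kappa).

Lemma far_point_defect (y : X) (t D0 S : R) :
  0 <= D0 -> T <= t -> d y (tau t) <= D0 -> T <= S ->
  S >= t + t ^ 2 + (t * (2 - kappa) + 2 * D0 + 1) * D0 + D0 + 1 ->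
  S ^ 2 - d y (rho S) ^ 2 <= (t * (2 - kappa) + 2 * D0 + 1) * d y (rho S).
Proof.
  intros HD0 HTt Hy HTS HS.
  assert (0 <= (t * (2 - kappa) + 2 * D0 + 1) * D0) by (apply Rmult_le_pos; nra).
  assert (HZ : d (tau t) (rho S) >= S - t).
  { pose proof (metric_triangle q (tau t) (rho S)) as Htri.
    rewrite <- Ht0, (ray_dist tau 0 t Rt) in Htri by lra.
    rewrite Ht0, <- Hr0, (ray_dist rho 0 S Rr) in Htri by nra. lra. }
  assert (HL : d y (rho S) >= d (tau t) (rho S) - D0).
  { pose proof (metric_triangle (tau t) y (rho S)).
    rewrite (metric_sym (tau t) y) in H0. lra. }
  exact (defect_arith S t _ _ D0 kappa HD0 Hk ltac:(lra) (Hgap t S HTt HTS) HZ HS HL).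
Qed.

(* [sigma n] is within 1 of the point at distance [n] from [y] on the geodesic to a far
   point [rho S]; this geodesic leaves [y] at an angle from [tau], so it stays close to [q]. *)
Lemma ray_towards_rho_lags (y : X) sigma (D0 n t : R) :
  0 <= D0 -> 1 <= n -> n * kappa >= 4 * D0 + 5 -> T <= t -> t >= n * (4 * D0 + 5) ->
  d y (tau t) <= D0 ->
  geodesic_ray X d sigma -> sigma 0 = y -> asymptotic X d sigma rho ->
  d q (sigma n) <= t + n - D0 - 1.
Proof.
  intros HD0 Hn Hnk HTt Htn Hy Rs Hs0 [C1 HC1].
  set (t' := d y q).
  assert (Ht' : t - D0 <= t' <= t + D0).
  { assert (d q (tau t) = t) by (rewrite <- Ht0, (ray_dist tau 0 t Rt); lra).
    pose proof (metric_triangle y (tau t) q). pose proof (metric_triangle q y (tau t)).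
    rewrite (metric_sym (tau t) q) in H0. rewrite (metric_sym q y) in H1.
    unfold t'. lra. }
  assert (HC1p : 0 <= C1)
    by (pose proof (HC1 0 (Rle_refl 0)); pose proof (metric_nonneg (sigma 0) (rho 0)); lra).
  set (A := t * (2 - kappa) + 2 * D0 + 1).
  assert (HA : 0 <= A * D0) by (apply Rmult_le_pos; unfold A; nra).
  assert (Ht'0 : 0 <= t') by apply metric_nonneg.
  assert (Hnt : 0 <= n * (C1 + t')) by (apply Rmult_le_pos; lra).
  set (S := T + (t + D0 + n) + (t + t ^ 2 + A * D0 + D0 + 1) + n * (C1 + t') + 1).
  assert (HS : 0 < S) by (unfold S; nra).
  set (L := d y (rho S)).
  assert (HLS : Rabs (L - S) <= t').
  { assert (d q (rho S) = S) by (rewrite <- Hr0, (ray_dist rho 0 S Rr); lra).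
    pose proof (metric_triangle y q (rho S)). pose proof (metric_triangle q y (rho S)).
    rewrite (metric_sym q y) in H1. apply Rabs_le_between. unfold L, t'. lra. }
  assert (HnL : n <= L) by (apply Rabs_le_between in HLS; unfold S in HLS; nra).
  pose proof (far_point_defect y t D0 S HD0 HTt Hy ltac:(unfold S; nra)
                ltac:(unfold S, A in *; nra)) as Hdef. fold A L in Hdef.
  destruct (geodesic_exists y (rho S)) as [gam Hgam].
  assert (Hchord : d q (gam (n / L)) <= t + n - D0 - 2).
  { pose proof (cat0_dist_chord_point q y (rho S) gam n Hgam ltac:(fold L; lra)
                  ltac:(fold L; lra)) as H.
    fold L t' in H. rewrite <- Hr0, (ray_dist rho 0 S Rr), Hr0 in H by lra.
    assert (n * (S ^ 2 - t' ^ 2 - L ^ 2) / L <= n * A).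
    { apply Rle_div_l; [lra |]. nra. }
    pose proof (chord_arith t t' n kappa D0 HD0 Hk Hn Hnk Htn Ht' Ht'0).
    fold A in H1. apply Rsqr_incr_0_var; unfold Rsqr; nra. }
  assert (Hsigma : d (sigma n) (gam (n / L)) <= 1).
  { rewrite <- Hs0 in Hgam.
    pose proof (ray_near_chord_point sigma (rho S) gam S n C1 Rs Hgam ltac:(unfold S; nra)
                  ltac:(rewrite Hs0; fold L; lra) ltac:(lra) (HC1 S ltac:(lra))) as H.
    rewrite Hs0 in H. fold L in H.
    eapply Rle_trans; [exact H |]. apply Rle_div_l; [lra |].
    assert (n * (C1 + Rabs (L - S)) <= n * (C1 + t')) by (apply Rmult_le_compat_l; lra).
    assert (n * (C1 + t') + 1 <= S) by (unfold S; nra). lra. }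
  pose proof (metric_triangle q (gam (n / L)) (sigma n)).
  rewrite (metric_sym (gam (n / L)) (sigma n)) in H. lra.
Qed.

(* The ray towards the far end of [tau] keeps running along [tau], while the ray towards
   the end of [rho] falls behind by [D0 + 1]. *)
Lemma rays_from_far_point_diverge (y : X) sigma1 sigma2 (D0 n t : R) :
  0 <= D0 -> 1 <= n -> n * kappa >= 4 * D0 + 5 -> T <= t -> t >= n * (4 * D0 + 5) ->
  d y (tau t) <= D0 ->
  geodesic_ray X d sigma1 -> sigma1 0 = y -> asymptotic X d sigma1 rho ->
  geodesic_ray X d sigma2 -> sigma2 0 = y -> asymptotic X d sigma2 tau ->
  1 <= d (sigma1 n) (sigma2 n).
Proof.
  intros HD0 Hn Hnk HTt Htn Hy R1 E1 A1 R2 E2 A2.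
  pose proof (ray_towards_rho_lags y sigma1 D0 n t HD0 Hn Hnk HTt Htn Hy R1 E1 A1) as Hnear.
  pose proof (asymptotic_ray_tracks sigma2 tau t D0 R2 Rt A2 ltac:(lra)
                ltac:(rewrite E2; exact Hy) n ltac:(lra)) as Htrack.
  assert (d q (tau (t + n)) = t + n) by (rewrite <- Ht0, (ray_dist tau 0 (t + n) Rt); lra).
  pose proof (metric_triangle q (sigma2 n) (tau (t + n))).
  pose proof (metric_triangle q (sigma1 n) (sigma2 n)). lra.
Qed.
End Gap.

Section Action.
Variable G : Type.
Variables (mul : G -> G -> G) (inv : G -> G) (e : G).
Hypothesis Hgrp : is_group G mul inv e.
Variable act : G -> X -> X.
Hypothesis Hiso : isometric_action G mul e X d act.

Lemma mul_inv_r a : mul a (inv a) = e.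
Proof.
  destruct Hgrp as [As [Id Iv]].
  rewrite <- (Id (mul a (inv a))), <- (Iv (inv a)) at 1.
  rewrite <- As, (As (inv a) a (inv a)), Iv, Id. apply Iv.
Qed.

Lemma mul_e_r a : mul a e = a.
Proof.
  destruct Hgrp as [As [Id Iv]].
  rewrite <- (Iv a), As, mul_inv_r. apply Id.
Qed.

Lemma inv_inv a : inv (inv a) = a.
Proof.
  destruct Hgrp as [As [Id Iv]].
  rewrite <- (mul_e_r (inv (inv a))), <- (Iv a), As, Iv. apply Id.
Qed.

Lemma act_isometry g x y : d (act g x) (act g y) = d x y.
Proof. apply (proj2 (proj2 Hiso)). Qed.

Lemma act_inv_l g x : act (inv g) (act g x) = x.
Proof.
  destruct Hiso as [H1 [H2 _]]. rewrite <- H2, (proj2 (proj2 Hgrp)). apply H1.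
Qed.

Lemma act_inv_r g x : act g (act (inv g) x) = x.
Proof. destruct Hiso as [H1 [H2 _]]. rewrite <- H2, mul_inv_r. apply H1. Qed.

Lemma act_ray g xi : geodesic_ray X d xi -> geodesic_ray X d (fun s => act g (xi s)).
Proof. intros R s t Hs Ht. rewrite act_isometry. apply R; assumption. Qed.

Lemma orbit_cobounded x0 : cocompact_action G X d act ->
  exists D0, 0 <= D0 /\ forall x, exists h, d (act h x0) x <= D0.
Proof.
  intros [K [HK Hcov]].
  destruct (HK X (fun k => Defs.ball X d k 1)) as [l Hl].
  - intro k. apply ball_open.
  - intros k _. exists k. unfold Defs.ball. rewrite metric_refl. lra.
  - destruct (list_bounded l (d x0)) as [B HB].
    exists (Rmax 0 (B + 1)). split; [apply Rmax_l |].
    intro x. destruct (Hcov x) as [g [k [Hk ->]]]. exists g. rewrite act_isometry.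
    destruct (Hl k Hk) as [i [Hi Hb]]. unfold Defs.ball in Hb.
    pose proof (HB i Hi). pose proof (metric_triangle x0 i k).
    pose proof (Rmax_r 0 (B + 1)). lra.
Qed.

Lemma far_translates_not_in x0 (F : list G) :
  exists R0, forall h, R0 < d x0 (act h x0) -> ~ In (inv h) F.
Proof.
  destruct (list_bounded F (fun g => d (act g x0) x0)) as [B HB].
  exists B. intros h Hh Hin. specialize (HB _ Hin). cbv beta in HB.
  rewrite <- (act_isometry h), act_inv_r in HB. lra.
Qed.

(* A Cauchy sequence [x n = g n (w n)] with [w n] in the compact set has a subsequence of
   [w] clustering at some [c]; properness at [c] leaves only finitely many candidates
   [g m c] for the limit. *)
Lemma geometric_action_complete :
  proper_action G X d act -> cocompact_action G X d act -> complete_space d.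
Proof.
  intros Hprop [K [HK Hcov]] x Hx.
  destruct (choice (fun n p => K (snd p) /\ x n = act (fst p) (snd p))) as [gw Hgw].
  { intro n. destruct (Hcov (x n)) as [g [w [Hw Hxw]]]. exists (g, w). auto. }
  set (g := fun n => fst (gw n)). set (w := fun n => snd (gw n)).
  assert (Hxw : forall n, x n = act (g n) (w n)) by apply Hgw.
  destruct (compact_cluster_point K w HK (fun n => proj1 (Hgw n))) as [c Hc].
  destruct (Hprop c) as [r [Hr [Phi HPhi]]].
  destruct (Hx (r / 3) ltac:(lra)) as [N HN].
  destruct (Hc (r / 3) ltac:(lra) N) as [n0 [Hn0 Hcn0]].
  destruct (cluster_point_in_list x
              (map (fun phi => act (inv (mul phi (inv (g n0)))) c) Phi)) as [p Hp].
  2: { exists p. apply cauchy_cluster_point_conv; assumption. }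
  intros eps Heps M.
  destruct (Hc (Rmin eps (r / 3)) ltac:(apply Rmin_pos; lra) (Nat.max M N)) as [m [Hm Hcm]].
  pose proof (Rmin_l eps (r / 3)). pose proof (Rmin_r eps (r / 3)).
  set (phi := mul (inv (g m)) (g n0)).
  assert (Hphi : act (inv (mul phi (inv (g n0)))) c = act (g m) c).
  { unfold phi. rewrite <- (proj1 Hgrp), mul_inv_r, mul_e_r, inv_inv. reflexivity. }
  exists m, (act (g m) c). split; [lia | split].
  - rewrite <- Hphi. apply (in_map (fun q => act (inv (mul q (inv (g n0)))) c)), HPhi.
    exists (w n0). unfold Defs.ball. split.
    + rewrite metric_sym. lra.
    + unfold phi. rewrite (proj1 (proj2 Hiso)), <- Hxw.
      pose proof (metric_triangle c (w m) (act (inv (g m)) (x n0))) as Htri.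
      replace (d (w m) (act (inv (g m)) (x n0))) with (d (x m) (x n0)) in Htri
        by (rewrite <- (act_isometry (inv (g m))), Hxw, act_inv_l; reflexivity).
      specialize (HN m n0 ltac:(lia) Hn0). rewrite (metric_sym c (w m)) in Htri. lra.
  - rewrite Hxw, act_isometry. lra.
Qed.

Lemma translated_ray_from (h : G) (x0 : X) (xi : R -> X) :
  complete_space d -> geodesic_ray X d xi ->
  geodesic_ray X d (fun s => act h (ray_from X d x0 (fun s => act (inv h) (xi s)) s)) /\
  act h (ray_from X d x0 (fun s => act (inv h) (xi s)) 0) = act h x0 /\
  asymptotic X d (fun s => act h (ray_from X d x0 (fun s => act (inv h) (xi s)) s)) xi.
Proof.
  intros Hcomp Rxi.
  destruct (ray_from_spec x0 _ Hcomp (act_ray (inv h) xi Rxi)) as [Rr [Er [C HCr]]].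
  split; [| split].
  - exact (act_ray h _ Rr).
  - rewrite Er. reflexivity.
  - exists C. intros s Hs.
    rewrite <- (act_isometry (inv h)), act_inv_l, metric_sym. apply HCr, Hs.
Qed.

(* Seen from [h x0], close to [beta t], the translates by [h] of the rays from [x0] towards
   [h^-1 alpha] and [h^-1 beta] diverge by time [n]. *)
Lemma dbd_translate_ge (x0 : X) (alpha beta rho : R -> X) (T kappa D0 t : R) (N : nat) (h : G) :
  complete_space d -> geodesic_ray X d alpha -> geodesic_ray X d beta ->
  geodesic_ray X d rho -> rho 0 = beta 0 -> asymptotic X d alpha rho ->
  0 < T -> 0 < kappa <= 1 -> angle_gap beta rho T kappa ->
  0 <= D0 -> INR (S N) * kappa >= 4 * D0 + 5 -> T <= t -> t >= INR (S N) * (4 * D0 + 5) ->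
  d (act h x0) (beta t) <= D0 ->
  (/ 2) ^ S N <= dbd X d x0 (fun s => act (inv h) (alpha s)) (fun s => act (inv h) (beta s)).
Proof.
  intros Hcomp Ra Rb Rr Hr0 Har HT Hk Hgap HD0 HNk HTt Htn Hh.
  apply dbd_ge_term; [apply metric_nonneg |].
  rewrite <- (act_isometry h).
  destruct (translated_ray_from h x0 alpha Hcomp Ra) as [R1 [E1 [C1 A1]]].
  destruct (translated_ray_from h x0 beta Hcomp Rb) as [R2 [E2 A2]].
  apply Rle_trans with 1; [rewrite <- (pow1 (S N)); apply pow_incr; lra |].
  apply (rays_from_far_point_diverge (beta 0) beta rho T kappa Rb Rr eq_refl Hr0 HT Hk Hgap
           (act h x0) (fun s => act h (ray_from X d x0 (fun s => act (inv h) (alpha s)) s))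
           (fun s => act h (ray_from X d x0 (fun s => act (inv h) (beta s)) s)) D0 (INR (S N)) t);
    auto.
  - rewrite S_INR. pose proof (pos_INR N). lra.
  - destruct Har as [C HCa]. exists (C1 + C). intros s Hs.
    pose proof (metric_triangle (act h (ray_from X d x0 (fun s => act (inv h) (alpha s)) s))
                  (alpha s) (rho s)).
    pose proof (A1 s Hs). pose proof (HCa s Hs). lra.
Qed.

Lemma limsupG_dbd_translates_pos (x0 : X) (alpha beta : R -> X) :
  proper_action G X d act -> cocompact_action G X d act ->
  geodesic_ray X d alpha -> geodesic_ray X d beta -> ~ asymptotic X d alpha beta ->
  Rbar_lt 0 (limsupG G (fun g => dbd X d x0 (fun t => act g (alpha t)) (fun t => act g (beta t)))).
Proof.
  intros Hprop Hcoc Ra Rb Hna.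
  pose proof (geometric_action_complete Hprop Hcoc) as Hcomp.
  destruct (orbit_cobounded x0 Hcoc) as [D0 [HD0 Hnear]].
  destruct (asymptotic_ray_exists Hcomp (beta 0) alpha Ra) as [rho [Rr [Hr0 Har]]].
  destruct (rays_separate alpha beta rho Har (eq_sym Hr0) Hna) as [T [HT Hsep]].
  destruct (rays_angle_gap (beta 0) beta rho T Rb Rr eq_refl Hr0 HT Hsep) as [kappa [Hk Hgap]].
  destruct (INR_unbounded ((4 * D0 + 5) / kappa)) as [N HN].
  assert (HNk : INR (S N) * kappa >= 4 * D0 + 5).
  { rewrite S_INR. apply Rlt_div_l in HN; lra. }
  apply (Rbar_lt_le_trans _ ((/ 2) ^ S N)); [apply pow_lt; lra |].
  apply limsupG_ge. intro F.
  destruct (far_translates_not_in x0 F) as [R0 HR0].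
  set (t' := Rmax (INR (S N) * (4 * D0 + 5)) (R0 + d x0 (beta 0) + D0 + 1)).
  set (t := Rmax T t').
  pose proof (Rmax_l T t') as HtT. pose proof (Rmax_r T t') as Htt'. fold t in HtT, Htt'.
  pose proof (Rmax_l (INR (S N) * (4 * D0 + 5)) (R0 + d x0 (beta 0) + D0 + 1)) as Htn.
  pose proof (Rmax_r (INR (S N) * (4 * D0 + 5)) (R0 + d x0 (beta 0) + D0 + 1)) as HtR.
  fold t' in Htn, HtR.
  destruct (Hnear (beta t)) as [h Hh].
  exists (inv h). split.
  - apply HR0.
    pose proof (ray_dist beta 0 t Rb ltac:(lra)).
    pose proof (metric_triangle x0 (act h x0) (beta t)).
    pose proof (metric_triangle (beta 0) x0 (beta t)) as Htri.
    rewrite (metric_sym (beta 0) x0) in Htri. lra.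
  - apply (dbd_translate_ge x0 alpha beta rho T kappa D0 t N h); auto; lra.
Qed.
End Action.
End CAT0.

Theorem theorem3p1 (X : Type) (d : X -> X -> R) (x0 : X)
  (G : Type) (mul : G -> G -> G) (inv : G -> G) (e : G) (act : G -> X -> X) :
  CAT0 X d ->
  is_group G mul inv e ->
  geometric_action G mul e X d act ->
  (* |boundary X| > 2 *)
  (exists r1 r2 r3 : R -> X,
     geodesic_ray X d r1 /\ geodesic_ray X d r2 /\ geodesic_ray X d r3 /\
     ~ asymptotic X d r1 r2 /\ ~ asymptotic X d r2 r3 /\ ~ asymptotic X d r1 r3) ->
  forall alpha beta : R -> X,
    geodesic_ray X d alpha -> geodesic_ray X d beta ->
    ~ asymptotic X d alpha beta ->
    Rbar_lt (Finite 0)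
      (limsupG G (fun g => dbd X d x0 (fun t => act g (alpha t)) (fun t => act g (beta t)))).
Proof.
  intros HC Hgrp [Hiso [Hprop Hcoc]] _ alpha beta Ra Rb Hna.
  exact (limsupG_dbd_translates_pos X d HC G mul inv e Hgrp act Hiso x0 alpha beta
           Hprop Hcoc Ra Rb Hna).
Qed.
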